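(* Let $G$ be a split reductive group whose root system $\Phi$ is irreducible of simply-laced type and of rank $r\geqslant2$, and let $\widetilde G$ be an $n$-fold Brylinski--Deligne cover associated with a Weyl-invariant quadratic form $Q$. Then $n_\alpha$ is independent of $\alpha\in\Delta$ and $$\mathrm{Im}(f_X)=\frac{[1,\mathrm{ht}(\alpha_0)]}{n_\alpha}=\mathrm{Im}(f_Y),$$ where $\mathrm{ht}(\alpha_0)$ is the height of the highest root $\alpha_0$ and $[a,b]$ denotes $\{a,a+1,\dots,b\}$.
   Context: Notation: root datum $(X,\Phi,\Delta;Y,\Phi^\vee,\Delta^\vee)$, positive roots $\Phi_+$, positive coroots $\Phi_+^\vee$; $\omega_\alpha\in X\otimes\mathbf R$ ($\alpha\in\Delta$) the fundamental weights (dual to $\Delta^\vee$), $\omega_\alpha^\vee$ the fundamental coweights, $\rho^\vee=\sum_{\alpha\in\Delta}\omega^\vee_\alpha$. $B_Q(y,z)=Q(y+z)-Q(y)-Q(z)$, $Y_{Q,n}=\{y\in Y:B_Q(y,z)\in n\mathbf Z\ \forall z\in Y\}$, $n_\alpha=n/\gcd(n,Q(\alpha^\vee))$, and $\tilde n_\alpha\in\{n_\alpha,n_\alpha/2\}$ ($\alpha\in\Phi$) is defined by $\mathbf Z\alpha^\vee\cap Y_{Q,n}=\mathbf Z\tilde n_\alpha\alpha^\vee$. Define $f_X:\Phi_+^\vee\to\mathbf Q$ by $f_X(\beta^\vee)=\sum_{\alpha\in\Delta}\langle\omega_\alpha/\tilde n_\alpha,\beta^\vee\rangle$ and $f_Y:\Phi_+\to\mathbf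 Q$ by $f_Y(\beta)=\langle\rho^\vee,\beta\rangle/\tilde n_\beta$. *)

From mathcomp Require Import all_boot all_order all_algebra.
Set Implicit Arguments. Unset Strict Implicit. Unset Printing Implicit Defensive.
Import Order.TTheory GRing.Theory Num.Theory.
Local Open Scope ring_scope.

(* Conventions: the character lattice X and the cocharacter lattice Y are both
   identified with Z^m = 'rV[int]_m, the perfect pairing <x,y> being the dot
   product.  X (x) Q and Y (x) Q are 'rV[rat]_m. *)

Definition pair (m : nat) (x y : 'rV[int]_m) : int := \sum_(i < m) x 0 i * y 0 i.

(* <w, y> for w in X (x) Q and y in Y *)
Definition pairXQ (m : nat) (w : 'rV[rat]_m) (y : 'rV[int]_m) : rat :=
  \sum_(i < m) w 0 i * (y 0 i)%:~R.

(* <x, v> for x in X and v in Y (x) Q *)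
Definition pairYQ (m : nat) (x : 'rV[int]_m) (v : 'rV[rat]_m) : rat :=
  \sum_(i < m) (x 0 i)%:~R * v 0 i.

Definition is_reduced_root_datum (m : nat) (Phi : seq 'rV[int]_m)
    (cor : 'rV[int]_m -> 'rV[int]_m) : Prop :=
  [/\ {in Phi &, injective cor},
      {in Phi, forall a, pair a (cor a) = 2},
      {in Phi &, forall a b, b - pair b (cor a) *: a \in Phi},
      {in Phi &, forall a b, cor b - pair a (cor b) *: cor a \in map cor Phi} &
      {in Phi, forall a (c : int), c *: a \in Phi -> c = 1 \/ c = -1}].

Definition lincomb (m r : nat) (D : 'I_r -> 'rV[int]_m) (c : 'I_r -> int)
  : 'rV[int]_m := \sum_(i < r) c i *: D i.

Definition is_base (m r : nat) (Phi : seq 'rV[int]_m) (D : 'I_r -> 'rV[int]_m)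
  : Prop :=
  [/\ forall i, D i \in Phi,
      forall c, lincomb D c = 0 -> forall i, c i = 0 &
      {in Phi, forall b, exists c, b = lincomb D c /\
          ((forall i, 0 <= c i) \/ (forall i, c i <= 0))}].

Definition positive_root (m r : nat) (Phi : seq 'rV[int]_m)
    (D : 'I_r -> 'rV[int]_m) (b : 'rV[int]_m) : Prop :=
  b \in Phi /\ exists c, b = lincomb D c /\ forall i, 0 <= c i.

Definition irreducible_rs (m : nat) (Phi : seq 'rV[int]_m)
    (cor : 'rV[int]_m -> 'rV[int]_m) : Prop :=
  ~ exists P : pred 'rV[int]_m,
      [/\ exists2 a, a \in Phi & P a,
          exists2 b, b \in Phi & ~~ P b &
          {in Phi &, forall a b, P a -> ~~ P b -> pair a (cor b) = 0}].

Definition simply_laced (m r : nat) (cor : 'rV[int]_m -> 'rV[int]_m)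
    (D : 'I_r -> 'rV[int]_m) : Prop :=
  forall i j, i != j -> pair (D i) (cor (D j)) = 0 \/ pair (D i) (cor (D j)) = -1.

Definition is_highest_root (m r : nat) (Phi : seq 'rV[int]_m)
    (D : 'I_r -> 'rV[int]_m) (a0 : 'rV[int]_m) : Prop :=
  a0 \in Phi /\ {in Phi, forall b, exists c, a0 - b = lincomb D c /\ forall i, 0 <= c i}.

Definition BQ (m : nat) (Q : 'rV[int]_m -> int) (y z : 'rV[int]_m) : int :=
  Q (y + z) - Q y - Q z.

Definition is_quadratic_form (m : nat) (Q : 'rV[int]_m -> int) : Prop :=
  (forall (k : int) y, Q (k *: y) = k ^+ 2 * Q y) /\
  (forall y1 y2 z, BQ Q (y1 + y2) z = BQ Q y1 z + BQ Q y2 z).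

(* Weyl invariance on Y: W is generated by y |-> y - <a, y> a^vee *)
Definition weyl_invariant (m : nat) (Phi : seq 'rV[int]_m)
    (cor : 'rV[int]_m -> 'rV[int]_m) (Q : 'rV[int]_m -> int) : Prop :=
  {in Phi, forall a y, Q (y - pair a y *: cor a) = Q y}.

Definition inYQn (m : nat) (Q : 'rV[int]_m -> int) (n : nat) (y : 'rV[int]_m) : Prop :=
  forall z, (n%:Z %| BQ Q y z)%Z.

Definition n_alpha (m : nat) (Q : 'rV[int]_m -> int) (n : nat)
    (cor : 'rV[int]_m -> 'rV[int]_m) (a : 'rV[int]_m) : nat :=
  (n %/ gcdn n `|Q (cor a)|)%N.

Definition is_ntilde (m : nat) (Phi : seq 'rV[int]_m)
    (cor : 'rV[int]_m -> 'rV[int]_m) (Q : 'rV[int]_m -> int) (n : nat)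
    (ntil : 'rV[int]_m -> nat) : Prop :=
  {in Phi, forall a, (0 < ntil a)%N /\
     forall k : int, inYQn Q n (k *: cor a) <-> ((ntil a)%:Z %| k)%Z}.

Definition f_X (m r : nat) (D : 'I_r -> 'rV[int]_m) (ntil : 'rV[int]_m -> nat)
    (om : 'I_r -> 'rV[rat]_m) (bv : 'rV[int]_m) : rat :=
  \sum_(i < r) pairXQ (om i) bv / (ntil (D i))%:R.

Definition rho_vee (m r : nat) (omv : 'I_r -> 'rV[rat]_m) : 'rV[rat]_m :=
  \sum_(i < r) omv i.

Definition f_Y (m r : nat) (ntil : 'rV[int]_m -> nat)
    (omv : 'I_r -> 'rV[rat]_m) (b : 'rV[int]_m) : rat :=
  pairYQ b (rho_vee omv) / (ntil b)%:R.

Definition height (m r : nat) (omv : 'I_r -> 'rV[rat]_m) (b : 'rV[int]_m) : rat :=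
  pairYQ b (rho_vee omv).

(* The form [wform x y = sum_v <x,v><y,v>] over the coroots is W-invariant and
   positive on roots; with it, every positive root is reached from a simple root
   by simple reflections that lower the height.  Irreducibility makes the Dynkin
   diagram connected, and adjacent simple roots are W-conjugate, so W-invariant
   quantities (root length, Q(b^vee), hence n_b) are constant on positive roots.
   Equal lengths make the coroot of a positive root have the same coefficients as
   the root, and force each height-lowering reflection to subtract exactly one
   simple root, so the heights of positive roots fill [1, ht(a0)].  In rank >= 2
   each positive root pairs to 1 with some cocharacter, whence ntil_b = n_b, and
   f_X(b^vee) = f_Y(b) = ht(b) / n_alpha. *)

From mathcomp Require Import all_boot all_order all_algebra.
From mathcomp Require Import ring zify.
Set Implicit Arguments. Unset Strict Implicit. Unset Printing Implicit Defensive.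
Import Order.TTheory GRing.Theory Num.Theory.
Local Open Scope ring_scope.

Section Pairing.
Variable m : nat.
Implicit Types (x y z : 'rV[int]_m) (v : 'rV[rat]_m).

Lemma pairDl x y z : pair (x + y) z = pair x z + pair y z.
Proof. by rewrite /pair -big_split; apply: eq_bigr => i _; rewrite mxE mulrDl. Qed.

Lemma pairDr x y z : pair x (y + z) = pair x y + pair x z.
Proof. by rewrite /pair -big_split; apply: eq_bigr => i _; rewrite mxE mulrDr. Qed.

Lemma pairZl (k : int) x z : pair (k *: x) z = k * pair x z.
Proof. by rewrite /pair mulr_sumr; apply: eq_bigr => i _; rewrite mxE mulrA. Qed.

Lemma pairZr (k : int) x z : pair x (k *: z) = k * pair x z.
Proof. by rewrite /pair mulr_sumr; apply: eq_bigr => i _; rewrite mxE mulrCA. Qed.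

Lemma pairBl x y z : pair (x - y) z = pair x z - pair y z.
Proof. by rewrite pairDl -scaleN1r pairZl mulN1r. Qed.

Lemma pairBr x y z : pair x (y - z) = pair x y - pair x z.
Proof. by rewrite pairDr -scaleN1r pairZr mulN1r. Qed.

Lemma pair0l z : pair 0 z = 0.
Proof. by rewrite -(scale0r 0) pairZl mul0r. Qed.

Lemma pair_suml (I : Type) (s : seq I) (P : pred I) (f : I -> 'rV[int]_m) z :
  pair (\sum_(i <- s | P i) f i) z = \sum_(i <- s | P i) pair (f i) z.
Proof. by apply: (big_morph (fun x => pair x z)) => [x y|]; rewrite ?pairDl ?pair0l. Qed.

Lemma pair_ext y z : (forall x, pair x y = pair x z) -> y = z.
Proof.
have pair_delta l w : pair (delta_mx 0 l) w = w 0 l.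
  rewrite /pair (bigD1 l) //= big1 ?addr0 => [|i /negbTE il]; rewrite mxE ?il ?andbF ?mul0r //.
  by rewrite !eqxx mul1r.
by move=> yz; apply/rowP => l; rewrite -!pair_delta yz.
Qed.

Lemma pairYQDl x y v : pairYQ (x + y) v = pairYQ x v + pairYQ y v.
Proof. by rewrite /pairYQ -big_split; apply: eq_bigr => i _; rewrite mxE intrD mulrDl. Qed.

Lemma pairYQZl (k : int) x v : pairYQ (k *: x) v = k%:~R * pairYQ x v.
Proof. by rewrite /pairYQ mulr_sumr; apply: eq_bigr => i _; rewrite mxE intrM mulrA. Qed.

Lemma pairYQ0l v : pairYQ 0 v = 0.
Proof. by rewrite -(scale0r 0) pairYQZl mul0r. Qed.

Lemma pairYQ_suml (I : Type) (s : seq I) (P : pred I) (f : I -> 'rV[int]_m) v :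
  pairYQ (\sum_(i <- s | P i) f i) v = \sum_(i <- s | P i) pairYQ (f i) v.
Proof. by apply: (big_morph (fun x => pairYQ x v)) => [x y|]; rewrite ?pairYQDl ?pairYQ0l. Qed.

Lemma pairYQ_sumr (I : Type) (s : seq I) (P : pred I) (f : I -> 'rV[rat]_m) x :
  pairYQ x (\sum_(i <- s | P i) f i) = \sum_(i <- s | P i) pairYQ x (f i).
Proof.
apply: (big_morph (pairYQ x)) => [v w|].
  by rewrite /pairYQ -big_split; apply: eq_bigr => i _; rewrite mxE mulrDr.
by rewrite /pairYQ big1 // => i _; rewrite mxE mulr0.
Qed.

Lemma pairXQ_sumr (I : Type) (s : seq I) (c : I -> int) (f : I -> 'rV[int]_m) v :
  pairXQ v (\sum_(i <- s) c i *: f i) = \sum_(i <- s) (c i)%:~R * pairXQ v (f i).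
Proof.
have pairXQDr x y : pairXQ v (x + y) = pairXQ v x + pairXQ v y.
  by rewrite /pairXQ -big_split; apply: eq_bigr => i _; rewrite mxE intrD mulrDr.
have pairXQ0r : pairXQ v 0 = 0 by rewrite /pairXQ big1 // => i _; rewrite mxE mulr0.
rewrite (big_morph (pairXQ v) pairXQDr pairXQ0r); apply: eq_bigr => i _.
by rewrite /pairXQ mulr_sumr; apply: eq_bigr => l _; rewrite mxE intrM mulrCA.
Qed.

End Pairing.

Lemma dvdn_mul_gcd n a b : (0 < n)%N -> (n %| a * b)%N = (n %/ gcdn n b %| a)%N.
Proof.
move=> n_gt0; have g_gt0 : (0 < gcdn n b)%N by rewrite gcdn_gt0 n_gt0.
have cop : coprime (n %/ gcdn n b) (b %/ gcdn n b).
  rewrite /coprime -(eqn_pmul2r g_gt0) mul1n muln_gcdl !divnK ?dvdn_gcdl ?dvdn_gcdr //.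
rewrite -[X in (a * X)%N](divnK (dvdn_gcdr n b)) -[X in (X %| _)%N](divnK (dvdn_gcdl n b)).
by rewrite mulnA dvdn_pmul2r // Gauss_dvdl.
Qed.

Section QuadraticForm.
Variables (m : nat) (Q : 'rV[int]_m -> int).
Hypothesis quadQ : is_quadratic_form Q.
Implicit Types y z : 'rV[int]_m.

Lemma BQC y z : BQ Q y z = BQ Q z y.
Proof. by rewrite /BQ [y + z]addrC; ring. Qed.

Lemma BQDl y1 y2 z : BQ Q (y1 + y2) z = BQ Q y1 z + BQ Q y2 z.
Proof. by case: quadQ => _; apply. Qed.

Lemma BQNl y z : BQ Q (- y) z = - BQ Q y z.
Proof.
have BQ0l : BQ Q 0 z = 0 by have := BQDl 0 0 z; rewrite addr0; lia.
by have := BQDl y (- y) z; rewrite subrr BQ0l; lia.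
Qed.

Lemma BQZl (k : int) y z : BQ Q (k *: y) z = k * BQ Q y z.
Proof.
have BQMn (p : nat) : BQ Q (p%:Z *: y) z = p%:Z * BQ Q y z.
  elim: p => [|p IH]; first by rewrite scale0r mul0r -(subrr 0) BQDl BQNl subrr.
  by rewrite intS scalerDl scale1r BQDl IH mulrDl mul1r.
by case: k => p; rewrite ?NegzE ?scaleNr ?BQNl BQMn ?mulNr.
Qed.

Lemma BQ_diag y : BQ Q y y = 2 * Q y.
Proof.
case: quadQ => hom _; rewrite /BQ (_ : y + y = 2 *: y) ?hom; first ring.
by rewrite scaler_nat mulr2n.
Qed.

End QuadraticForm.

Section Lincomb.
Variables (m r : nat) (f : 'I_r -> 'rV[int]_m).
Implicit Types c : 'I_r -> int.

Lemma sum_mul_delta (k : int) j : \sum_(i < r) k * (i == j)%:R = k.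
Proof. by rewrite (bigD1 j) //= eqxx mulr1 big1 ?addr0 // => i /negbTE ->; rewrite mulr0. Qed.

Lemma lincombB c c' : lincomb f (fun i => c i - c' i) = lincomb f c - lincomb f c'.
Proof. by rewrite /lincomb -sumrB; apply: eq_bigr => i _; rewrite scalerBl. Qed.

Lemma lincombN c : lincomb f (fun i => - c i) = - lincomb f c.
Proof. by rewrite /lincomb -sumrN; apply: eq_bigr => i _; rewrite scaleNr. Qed.

Lemma lincomb_delta (k : int) j : lincomb f (fun i => k * (i == j)%:R) = k *: f j.
Proof.
rewrite /lincomb (bigD1 j) //= eqxx mulr1 big1 ?addr0 // => i /negbTE ->.
by rewrite mulr0 scale0r.
Qed.

End Lincomb.

Section RootDatum.
Variables (m : nat) (Phi : seq 'rV[int]_m) (cor : 'rV[int]_m -> 'rV[int]_m).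
Hypothesis rdPhi : is_reduced_root_datum Phi cor.
Implicit Types (a b x y : 'rV[int]_m).

Definition reflX a x := x - pair x (cor a) *: a.
Definition reflY a y := y - pair a y *: cor a.

Lemma pair_root_cor a : a \in Phi -> pair a (cor a) = 2.
Proof. by case: rdPhi => _ + _ _ _; apply. Qed.

Lemma reflX_root a b : a \in Phi -> b \in Phi -> reflX a b \in Phi.
Proof. by case: rdPhi => _ _ + _ _; apply. Qed.

Lemma root_scale a (k : int) : a \in Phi -> k *: a \in Phi -> k = 1 \/ k = -1.
Proof. by case: rdPhi => _ _ _ _ H aP; apply: H. Qed.

Lemma reflX_self a : a \in Phi -> reflX a a = - a.
Proof. by move=> aP; rewrite /reflX pair_root_cor // scaler_nat mulr2n opprD addrA subrr sub0r. Qed.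

Lemma root_opp a : a \in Phi -> - a \in Phi.
Proof. by move=> aP; rewrite -reflX_self // reflX_root. Qed.

Lemma reflXK a : a \in Phi -> involutive (reflX a).
Proof.
move=> aP x; rewrite /reflX pairBl pairZl pair_root_cor //.
by rewrite (_ : _ - _ * 2 = - pair x (cor a)) ?scaleNr ?opprK ?subrK //; ring.
Qed.

Lemma reflYK a : a \in Phi -> involutive (reflY a).
Proof.
move=> aP y; rewrite /reflY pairBr pairZr pair_root_cor //.
by rewrite (_ : _ - _ * 2 = - pair a y) ?scaleNr ?opprK ?subrK //; ring.
Qed.

Lemma pair_reflX a x y : pair (reflX a x) y = pair x (reflY a y).
Proof. by rewrite pairBl pairBr pairZl pairZr mulrC. Qed.

Definition coroots := undup (map cor Phi).

Lemma perm_reflY_coroots a : a \in Phi -> perm_eq (map (reflY a) coroots) coroots.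
Proof.
move=> aP; have reflY_inj := can_inj (reflYK aP).
have sub : {subset map (reflY a) coroots <= coroots}.
  move=> _ /mapP[v + ->]; rewrite !mem_undup => /mapP[b bP ->].
  by case: rdPhi => _ _ _ + _; apply.
have uniq_img : uniq (map (reflY a) coroots) by rewrite map_inj_uniq ?undup_uniq.
have [_ eq_img] := uniq_min_size uniq_img sub (eq_leq (esym (size_map _ _))).
by apply: uniq_perm; rewrite ?undup_uniq.
Qed.

Definition wform x y := \sum_(v <- coroots) pair x v * pair y v.

Lemma wformC x y : wform x y = wform y x.
Proof. by apply: eq_bigr => v _; rewrite mulrC. Qed.

Lemma wformDl x y z : wform (x + y) z = wform x z + wform y z.
Proof. by rewrite /wform -big_split; apply: eq_bigr => v _; rewrite pairDl mulrDl. Qed.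

Lemma wformZl (k : int) x z : wform (k *: x) z = k * wform x z.
Proof. by rewrite /wform mulr_sumr; apply: eq_bigr => v _; rewrite pairZl mulrA. Qed.

Lemma wformNl x z : wform (- x) z = - wform x z.
Proof. by rewrite -scaleN1r wformZl mulN1r. Qed.

Lemma wformBl x y z : wform (x - y) z = wform x z - wform y z.
Proof. by rewrite wformDl wformNl. Qed.

Lemma wformBr x y z : wform z (x - y) = wform z x - wform z y.
Proof. by rewrite wformC wformBl !(wformC z). Qed.

Lemma wform_suml (I : Type) (s : seq I) (c : I -> int) (f : I -> 'rV[int]_m) z :
  wform (\sum_(i <- s) c i *: f i) z = \sum_(i <- s) c i * wform (f i) z.
Proof.
rewrite (big_morph (fun x => wform x z) (fun x y => wformDl x y z) (_ : _ = 0)).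
  by apply: eq_bigr => i _; rewrite wformZl.
by rewrite -(scale0r 0) wformZl mul0r.
Qed.

Lemma wform_ge0 x : 0 <= wform x x.
Proof. by apply: sumr_ge0 => v _; rewrite -expr2 sqr_ge0. Qed.

Lemma wform_root_gt0 a : a \in Phi -> 0 < wform a a.
Proof.
move=> aP; have aV : cor a \in coroots by rewrite mem_undup map_f.
rewrite /wform (bigD1_seq (cor a)) ?undup_uniq //= pair_root_cor //.
by rewrite ltr_pwDl // sumr_ge0 // => v _; rewrite -expr2 sqr_ge0.
Qed.

Lemma wform_reflX a x y : a \in Phi -> wform (reflX a x) (reflX a y) = wform x y.
Proof.
move=> aP; rewrite /wform; under eq_bigr do rewrite !pair_reflX.
rewrite -(big_map (reflY a) xpredT (fun v => pair x v * pair y v)).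
exact: perm_big (perm_reflY_coroots aP).
Qed.

Lemma wform_root a x : a \in Phi -> 2 * wform x a = pair x (cor a) * wform a a.
Proof.
move=> aP; have := wform_reflX x a aP; rewrite reflX_self // /reflX.
rewrite wformC wformNl wformBr (wformC a (_ *: _)) wformZl (wformC a x); lia.
Qed.

Lemma cor_reflX a b : a \in Phi -> b \in Phi -> cor (reflX a b) = reflY a (cor b).
Proof.
move=> aP bP; apply: pair_ext => x; apply: (mulIf (lt0r_neq0 (wform_root_gt0 bP))).
rewrite -pair_reflX -wform_root // -{1}(wform_reflX b b aP) -wform_root ?reflX_root //.
by rewrite -(wform_reflX x _ aP) reflXK.
Qed.

Lemma pair_cor_sym a b : a \in Phi -> b \in Phi -> wform a a = wform b b ->
  pair a (cor b) = pair b (cor a).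
Proof.
move=> aP bP ab; apply: (mulIf (lt0r_neq0 (wform_root_gt0 bP))).
by rewrite -wform_root // wformC wform_root // ab.
Qed.

(* The roots [a - 2t(b - a)] form an infinite string inside the finite [Phi]. *)
Lemma root_eq_of_pair_cor2 a b : a \in Phi -> b \in Phi ->
  pair a (cor b) = 2 -> pair b (cor a) = 2 -> a = b.
Proof.
move=> aP bP ab ba; set x := b - a.
have xa : pair x (cor a) = 0 by rewrite pairBl ba pair_root_cor ?subrr.
have xb : pair x (cor b) = 0 by rewrite pairBl ab pair_root_cor ?subrr.
pose y (t : nat) := a - (2 * t%:Z) *: x.
have yP t : y t \in Phi.
  elim: t => [|t IH]; first by rewrite /y mulr0 scale0r subr0.
  suff -> : y t.+1 = reflX a (reflX b (y t)) by rewrite !reflX_root.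
  have yb : pair (y t) (cor b) = 2 by rewrite pairBl pairZl xb mulr0 subr0.
  have ya : pair (y t - 2 *: b) (cor a) = -2.
    by rewrite !pairBl !pairZl xa ba pair_root_cor //; lia.
  by rewrite /reflX yb ya; apply/rowP => l; rewrite /y /x !mxE intS; ring.
apply/eqP; rewrite eq_sym -subr_eq0 -/x; apply/negPn/negP => x_neq0.
have y_inj : injective y.
  move=> t1 t2 /eqP; rewrite /y -subr_eq0 opprB addrC addrA subrK -scalerBl scalemx_eq0.
  by rewrite (negbTE x_neq0) orbF subr_eq0 => /eqP; lia.
have uniq_ys : uniq (map y (iota 0 (size Phi).+1)) by rewrite map_inj_uniq ?iota_uniq.
have sub : {subset map y (iota 0 (size Phi).+1) <= Phi} by move=> _ /mapP[t _ ->].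
by have := uniq_leq_size uniq_ys sub; rewrite size_map size_iota ltnn.
Qed.

Lemma pair_cor_le1 a b : a \in Phi -> b \in Phi -> a != b -> wform a a = wform b b ->
  pair a (cor b) <= 1.
Proof.
move=> aP bP ab_neq ab_len; have ba := pair_cor_sym aP bP ab_len.
have := wform_ge0 (a - b); rewrite !wformBl !wformBr (wformC b a).
have := wform_root a bP; have := wform_root_gt0 bP.
have [ab2|k_neq2] := eqVneq (pair a (cor b)) 2; last by rewrite ab_len; nia.
by move: ab_neq; rewrite (root_eq_of_pair_cor2 aP bP ab2) ?eqxx // -ba.
Qed.

Section WeylInvariantForm.
Variables (Q : 'rV[int]_m -> int) (n : nat).
Hypotheses (quadQ : is_quadratic_form Q) (weylQ : weyl_invariant Phi cor Q).
Hypothesis n_gt0 : (0 < n)%N.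

Lemma BQ_cor a z : a \in Phi -> BQ Q z (cor a) = pair a z * Q (cor a).
Proof.
move=> aP; have reflYD y w : reflY a (y + w) = reflY a y + reflY a w.
  by rewrite /reflY pairDr scalerDl opprD addrACA.
have : BQ Q (reflY a z) (reflY a (cor a)) = BQ Q z (cor a).
  by rewrite /BQ -reflYD !weylQ.
have -> : reflY a (cor a) = - cor a.
  by rewrite /reflY pair_root_cor // scaler_nat mulr2n opprD addrA subrr sub0r.
rewrite BQC (BQNl quadQ) BQC /reflY (BQDl quadQ) -scaleNr (BQZl quadQ) (BQ_diag quadQ).
lia.
Qed.

Lemma inYQn_scale_cor b z (k : int) : b \in Phi -> pair b z = 1 ->
  inYQn Q n (k *: cor b) <-> ((n_alpha Q n cor b)%:Z %| k)%Z.
Proof.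
move=> bP bz; have BQE y : BQ Q (k *: cor b) y = k * pair b y * Q (cor b).
  by rewrite (BQZl quadQ) BQC BQ_cor // mulrA.
have dvdE l : (n%:Z %| l * Q (cor b))%Z = ((n_alpha Q n cor b)%:Z %| l)%Z.
  by rewrite !dvdzE abszM /= dvdn_mul_gcd.
split => [/(_ z)|nk y]; first by rewrite BQE bz mulr1 dvdE.
by rewrite BQE dvdE dvdz_mulr.
Qed.

Lemma ntilde_eq_n_alpha ntil b z : is_ntilde Phi cor Q n ntil -> b \in Phi ->
  pair b z = 1 -> ntil b = n_alpha Q n cor b.
Proof.
move=> ntilde bP bz; have [_ ntilE] := ntilde b bP.
have dvd_iff k : (ntil b %| k)%Z <-> ((n_alpha Q n cor b)%:Z %| k)%Z.
  exact: iff_trans (iff_sym (ntilE k)) (inYQn_scale_cor k bP bz).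
have := (dvd_iff (ntil b)).1 (dvdzz _); have := (dvd_iff (n_alpha Q n cor b)).2 (dvdzz _).
by rewrite !dvdzE /= => ntil_dvd nalpha_dvd; apply/eqP; rewrite eqn_dvd ntil_dvd nalpha_dvd.
Qed.

End WeylInvariantForm.

Section Base.
Variables (r : nat) (D : 'I_r -> 'rV[int]_m).
Hypothesis baseD : is_base Phi D.
Local Notation positive := (positive_root Phi D).

Lemma base_root j : D j \in Phi.
Proof. by case: baseD. Qed.

Lemma root_lincomb b : b \in Phi -> exists c, b = lincomb D c /\
  ((forall i, 0 <= c i) \/ (forall i, c i <= 0)).
Proof. by case: baseD => _ _; apply. Qed.

Lemma lincomb_inj c c' : lincomb D c = lincomb D c' -> c =1 c'.
Proof.
move=> /eqP; rewrite -subr_eq0 -lincombB => /eqP cc' i; apply/eqP.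
by rewrite -subr_eq0; case: baseD => _ /(_ _ cc' i) -> _.
Qed.

Lemma reflX_lincomb c j : reflX (D j) (lincomb D c) =
  lincomb D (fun i => c i - pair (lincomb D c) (cor (D j)) * (i == j)%:R).
Proof. by rewrite lincombB lincomb_delta. Qed.

Lemma root_pos_or_neg b : b \in Phi -> positive b \/ positive (- b).
Proof.
move=> bP; have [c [bE [c_ge0|c_le0]]] := root_lincomb bP; first by left; split; last exists c.
right; split; first exact: root_opp.
exists (fun i => - c i); split=> [|i]; last by rewrite oppr_ge0.
by rewrite lincombN bE.
Qed.

Lemma positive_root_pair_gt0 b : positive b -> exists j, 0 < pair b (cor (D j)).
Proof.
move=> [bP [c [bE c_ge0]]].
have [/existsP //|/existsPn pair_le0] := boolP [exists j, 0 < pair b (cor (D j))].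
suff : wform b b <= 0 by rewrite leNgt wform_root_gt0.
rewrite {1}bE wform_suml; apply: sumr_le0 => i _; apply: mulr_ge0_le0 (c_ge0 i) _.
have := wform_root b (base_root i); have := wform_root_gt0 (base_root i).
have := pair_le0 i; rewrite wformC -leNgt; nia.
Qed.

Lemma positive_root_descent b : positive b ->
  (exists j, b = D j) \/ exists2 j, 0 < pair b (cor (D j)) & positive (reflX (D j) b).
Proof.
move=> posb; have [j k_gt0] := positive_root_pair_gt0 posb.
have [bP [c [bE c_ge0]]] := posb; set k := pair b (cor (D j)) in k_gt0.
have sP := reflX_root (base_root j) bP.
have [c' [sE [c'_ge0|c'_le0]]] := root_lincomb sP.
  by right; exists j => //; split; last exists c'.
have c'E : c' =1 (fun i => c i - k * (i == j)%:R).
  by apply: lincomb_inj; rewrite -sE bE reflX_lincomb -bE.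
have c_off i : i != j -> c i = 0.
  move=> /negbTE ij; apply/eqP; rewrite eq_le c_ge0 andbT.
  by have := c'_le0 i; rewrite c'E ij mulr0 subr0.
have b_scale : b = c j *: D j.
  rewrite bE -lincomb_delta /lincomb; apply: eq_bigr => i _.
  by case: (eqVneq i j) => [->|/c_off ->]; rewrite ?mulr1 ?mulr0.
have [cj1|cjN1] : c j = 1 \/ c j = -1 by apply: root_scale (base_root j) _; rewrite -b_scale.
  by left; exists j; rewrite b_scale cj1 scale1r.
by have := c_ge0 j; rewrite cjN1.
Qed.

Lemma positive_root_ind (P : 'rV[int]_m -> Prop) :
  (forall j, P (D j)) ->
  (forall b j, positive b -> 0 < pair b (cor (D j)) -> positive (reflX (D j) b) ->
     P (reflX (D j) b) -> P b) ->
  forall b, positive b -> P b.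
Proof.
move=> P_simple P_step.
suff ind N b c : b \in Phi -> b = lincomb D c -> (forall i, 0 <= c i) ->
    \sum_(i < r) c i < N%:Z -> P b.
  move=> b [bP [c [bE c_ge0]]]; apply: (ind `|\sum_(i < r) c i|.+1 b c) => //.
  by have : 0 <= \sum_(i < r) c i := sumr_ge0 _ (fun i _ => c_ge0 i); lia.
elim: N b c => [|N IH] b c bP bE c_ge0 sum_lt.
  by have : 0 <= \sum_(i < r) c i := sumr_ge0 _ (fun i _ => c_ge0 i); lia.
have posb : positive b by split; last exists c.
have [[j ->]//|[j k_gt0 poss]] := positive_root_descent posb.
apply: (P_step b j posb k_gt0 poss); have [sP [c' [sE c'_ge0]]] := poss.
apply: (IH _ c') => //; have c'E : c' =1 (fun i => c i - pair b (cor (D j)) * (i == j)%:R).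
  by apply: lincomb_inj; rewrite -sE bE reflX_lincomb -bE.
rewrite (eq_bigr _ (fun i _ => c'E i)) sumrB sum_mul_delta.
by move: sum_lt k_gt0; set S := \sum_(i < r) c i; lia.
Qed.

Lemma simple_root_positive j : positive (D j).
Proof.
split; first exact: base_root.
exists (fun i => 1 * (i == j)%:R); rewrite lincomb_delta scale1r.
by split=> // i; rewrite mul1r ler0n.
Qed.

Section SimplyLaced.
Variable omv : 'I_r -> 'rV[rat]_m.
Hypothesis omv_dual : forall i j, pairYQ (D j) (omv i) = (i == j)%:R.
Hypothesis slD : simply_laced cor D.
Hypothesis irrPhi : irreducible_rs Phi cor.

Definition coord i x := pairYQ x (omv i).
Definition cartan i j := pair (D i) (cor (D j)).
Definition dynkin_adj : rel 'I_r := fun i j => cartan i j == -1.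

Lemma coord_lincomb c i : coord i (lincomb D c) = (c i)%:~R.
Proof.
rewrite /coord pairYQ_suml (bigD1 i) //= big1 ?addr0 => [|l /negbTE li].
  by rewrite pairYQZl omv_dual eqxx mulr1.
by rewrite pairYQZl omv_dual eq_sym li mulr0.
Qed.

Lemma coord_lincomb_eq0 c i : coord i (lincomb D c) = 0 -> c i = 0.
Proof. by rewrite coord_lincomb => /eqP; rewrite intr_eq0 => /eqP. Qed.

Lemma coord_reflX x j l :
  coord l (reflX (D j) x) = coord l x - (pair x (cor (D j)))%:~R * (l == j)%:R.
Proof. by rewrite /coord pairYQDl -scaleNr pairYQZl omv_dual intrN mulNr. Qed.

Lemma pair_lincomb_cartan c j : pair (lincomb D c) (cor (D j)) = \sum_i c i * cartan i j.
Proof. by rewrite pair_suml; apply: eq_bigr => i _; rewrite pairZl. Qed.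

Lemma cartan_sym i j : cartan i j = cartan j i.
Proof.
have [-> //|ij] := eqVneq i j; have ji : j != i by rewrite eq_sym.
have wij := wform_root (D i) (base_root j); have wji := wform_root (D j) (base_root i).
have wi := wform_root_gt0 (base_root i); have wj := wform_root_gt0 (base_root j).
rewrite wformC in wji; rewrite /cartan.
by have [] := slD ij; have [] := slD ji; move=> e1 e2; rewrite e1 e2 in wij wji *; lia.
Qed.

Definition supported (T : pred 'I_r) x := [forall l, ~~ T l ==> (coord l x == 0)].

Lemma supportedP T x : reflect (forall l, ~~ T l -> coord l x = 0) (supported T x).
Proof.
apply: (iffP forallP) => [xT l nTl | xT l]; last by apply/implyP => /xT ->.
by apply/eqP; move/implyP: (xT l); apply.
Qed.

Lemma supportedN T x : supported T (- x) = supported T x.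
Proof.
apply: eq_forallb => l; rewrite /coord -scaleN1r pairYQZl mulN1r.
by rewrite oppr_eq0.
Qed.

Lemma supported_simple T j : supported T (D j) = T j.
Proof.
apply/supportedP/idP => [Dj_supp | Tj l nTl]; last first.
  by rewrite /coord omv_dual; case: eqVneq nTl => // ->; rewrite Tj.
by apply/negPn/negP => /Dj_supp; rewrite /coord omv_dual eqxx => /eqP; rewrite oner_eq0.
Qed.

Definition separated (T : pred 'I_r) := forall l l', T l != T l' -> cartan l l' = 0.

Lemma separatedC T : separated T -> separated (predC T).
Proof. by move=> sepT l l'; rewrite /= (inj_eq negb_inj); apply: sepT. Qed.

Lemma supported_reflX T j x : separated T -> x \in Phi ->
  supported T x -> supported T (reflX (D j) x).
Proof.
move=> sepT xP /supportedP xT; apply/supportedP => l nTl.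
rewrite coord_reflX xT // sub0r; have [lj|] := eqVneq l j; last by rewrite mulr0 oppr0.
have [c [xE _]] := root_lincomb xP.
rewrite xE pair_lincomb_cartan big1 ?mul0r ?oppr0 // => i _.
have [Ti|nTi] := boolP (T i); first by rewrite sepT ?mulr0 // Ti -lj.
by rewrite (@coord_lincomb_eq0 c i) ?mul0r // -xE xT.
Qed.

Lemma root_supported_split T b : separated T -> b \in Phi ->
  supported T b || supported (predC T) b.
Proof.
move=> sepT bP.
have split_pos : forall x, positive x -> supported T x || supported (predC T) x.
  apply: positive_root_ind => [j | {}x j [xP _] _ _].
    by rewrite !supported_simple /= orbN.
  have sP := reflX_root (base_root j) xP.
  case/orP=> [sT|sC]; rewrite -(reflXK (base_root j) x); apply/orP; [left|right].
    exact: supported_reflX sepT sP sT.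
  exact: supported_reflX (separatedC sepT) sP sC.
by have [/split_pos | /split_pos] := root_pos_or_neg bP; rewrite ?supportedN.
Qed.

Lemma wform_supported_orth T a b : separated T -> a \in Phi -> b \in Phi ->
  supported T a -> supported (predC T) b -> wform a b = 0.
Proof.
move=> sepT aP bP /supportedP aT /supportedP bC.
have [ca [aE _]] := root_lincomb aP; have [cb [bE _]] := root_lincomb bP.
rewrite aE wform_suml big1 // => l _.
have [Tl|nTl] := boolP (T l); last by rewrite (@coord_lincomb_eq0 ca l) ?mul0r // -aE aT.
rewrite wformC bE wform_suml big1 ?mulr0 // => l' _.
have [Tl'|nTl'] := boolP (T l').
  by rewrite (@coord_lincomb_eq0 cb l') ?mul0r // -bE bC //= Tl'.
have := wform_root (D l') (base_root l).
rewrite -/(cartan l' l) sepT; last by rewrite Tl (negbTE nTl').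
by rewrite mul0r => /eqP; rewrite mulf_eq0 => /orP[//|/eqP->]; rewrite mulr0.
Qed.

Lemma dynkin_connected i j : connect dynkin_adj i j.
Proof.
apply/idPn => not_ij; apply: irrPhi.
pose T : pred 'I_r := connect dynkin_adj i.
have adjT l l' : dynkin_adj l l' -> T l = T l'.
  move=> adj; have adj' : dynkin_adj l' l by rewrite /dynkin_adj cartan_sym.
  by apply/idP/idP => Tl; apply: connect_trans Tl (connect1 _).
have sepT : separated T.
  move=> l l' Tll'; have ll' : l != l' by apply: contraNneq Tll' => ->.
  by have [//|/eqP adj] := slD ll'; rewrite (adjT l l') ?eqxx in Tll'.
exists (supported T); split.
- by exists (D i); rewrite ?base_root // supported_simple /T connect0.
- by exists (D j); rewrite ?base_root // supported_simple.
move=> a b aP bP Ta nTb.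
have Cb : supported (predC T) b by have := root_supported_split sepT bP; rewrite (negbTE nTb).
have := wform_root a bP; rewrite (wform_supported_orth sepT aP bP Ta Cb) mulr0 => /esym/eqP.
by rewrite mulf_eq0 (gt_eqF (wform_root_gt0 bP)) orbF => /eqP.
Qed.

Lemma reflX_adj i j : dynkin_adj i j -> reflX (D j) (reflX (D i) (D j)) = D i.
Proof.
move=> /eqP adj; have adj' : cartan j i = -1 by rewrite cartan_sym.
rewrite {2}/reflX -/(cartan j i) adj' scaleN1r opprK /reflX pairDl -/(cartan i j) adj.
by rewrite pair_root_cor ?base_root // (_ : 2 + -1 = 1) // scale1r addrAC subrr add0r.
Qed.

Lemma simple_root_invariant (U : Type) (f : 'rV[int]_m -> U) :
  {in Phi &, forall a b, f (reflX a b) = f b} -> forall i j, f (D i) = f (D j).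
Proof.
move=> finv i j; have /connectP[p adj_p ->] := dynkin_connected i j.
elim: p i adj_p => //= l p IH i /andP[adj_il /IH <-].
by rewrite -(reflX_adj adj_il) !finv ?reflX_root ?base_root.
Qed.

Lemma positive_root_invariant (U : Type) (f : 'rV[int]_m -> U) :
  {in Phi &, forall a b, f (reflX a b) = f b} -> forall i b, positive b -> f b = f (D i).
Proof.
move=> finv i; apply: positive_root_ind => [j | b j [bP _] _ _ <-].
  exact: simple_root_invariant.
by rewrite finv ?base_root.
Qed.

Lemma positive_root_wform i b : positive b -> wform b b = wform (D i) (D i).
Proof.
by apply: (positive_root_invariant (f := fun b => wform b b)) => a x aP _; apply: wform_reflX.
Qed.

Lemma cor_positive_root b c : positive b -> b = lincomb D c -> cor b = lincomb (cor \o D) c.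
Proof.
move=> posb; move: b posb c; apply: positive_root_ind => [j c|b j posb _ _ IH c bE].
  rewrite -{1}(scale1r (D j)) -lincomb_delta => /lincomb_inj cE.
  by rewrite -(scale1r (cor (D j))) -(lincomb_delta (cor \o D)); apply: eq_bigr => i _; rewrite cE.
have [bP _] := posb; have := IH _ (etrans (congr1 _ bE) (reflX_lincomb c j)).
rewrite -bE lincombB lincomb_delta cor_reflX ?base_root // /reflY.
by rewrite (pair_cor_sym (base_root j) bP) -?(positive_root_wform j posb) // => /addIr.
Qed.

Lemma height_lincomb c : height omv (lincomb D c) = (\sum_i c i)%:~R.
Proof.
by rewrite /height /rho_vee pairYQ_sumr rmorph_sum; apply: eq_bigr => i _; apply: coord_lincomb.
Qed.

Lemma heightB x y : height omv (x - y) = height omv x - height omv y.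
Proof. by rewrite /height pairYQDl -scaleN1r pairYQZl mulN1r. Qed.

Lemma height_simple j : height omv (D j) = 1.
Proof. by rewrite -(scale1r (D j)) -lincomb_delta height_lincomb sum_mul_delta. Qed.

Lemma positive_root_height_nat b : positive b -> exists2 k : nat, (0 < k)%N & height omv b = k%:R.
Proof.
move=> [bP [c [bE c_ge0]]]; rewrite bE height_lincomb.
have sum_ge0 : 0 <= \sum_(i < r) c i by apply: sumr_ge0.
exists `|(\sum_(i < r) c i)%R|%N; last by rewrite pmulrn gez0_abs.
rewrite absz_gt0; apply: contraTneq bP => sum_eq0.
have c0 i : c i = 0 by apply: (psumr_eq0P (fun i _ => c_ge0 i) sum_eq0).
rewrite bE /lincomb big1 => [|i _]; last by rewrite c0 scale0r.
by apply/negP => /pair_root_cor; rewrite pair0l.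
Qed.

Lemma positive_root_sub_simple b : positive b -> 1 < height omv b ->
  exists j, positive (b - D j).
Proof.
move=> posb ht_gt1; have [bP _] := posb.
have [[j bE]|[j k_gt0 poss]] := positive_root_descent posb.
  by move: ht_gt1; rewrite bE height_simple ltxx.
have b_neq : b != D j by apply: contraTneq ht_gt1 => ->; rewrite height_simple ltxx.
have := pair_cor_le1 bP (base_root j) b_neq (positive_root_wform j posb).
by move=> k_le1; exists j; rewrite /reflX (_ : pair b _ = 1) ?scale1r // in poss; lia.
Qed.

Section Highest.
Variable a0 : 'rV[int]_m.
Hypothesis highest : is_highest_root Phi D a0.

Lemma highest_root_positive : positive a0.
Proof.
have [a0P a0_max] := highest; have [c [a0E _]] := root_lincomb a0P.
have [c' [a0NE c'_ge0]] := a0_max _ (root_opp a0P).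
split => //; exists c; split => // i.
have cc' : (fun i => c i - - c i) =1 c' by apply: lincomb_inj; rewrite lincombB lincombN -a0E.
by have := c'_ge0 i; rewrite -cc'; lia.
Qed.

Lemma height_le_highest b : b \in Phi -> height omv b <= height omv a0.
Proof.
move=> bP; have [_ /(_ b bP)[c [bE c_ge0]]] := highest.
by rewrite -subr_ge0 -heightB bE height_lincomb ler0z sumr_ge0.
Qed.

Lemma positive_root_heights (f : 'rV[int]_m -> rat) (phi : rat -> rat) q :
  (forall b, positive b -> f b = phi (height omv b)) ->
  (exists2 b, positive b & q = f b) <->
  (exists k : nat, [/\ (1 <= k)%N, k%:R <= height omv a0 & q = phi k%:R]).
Proof.
move=> fE; split => [[b posb ->]|[k [k_gt0 k_le ->]]].
  have [k k_gt0 hk] := positive_root_height_nat posb; exists k; rewrite fE // -hk; split => //.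
  by apply: height_le_highest; case: posb.
have [K K_gt0 hK] := positive_root_height_nat highest_root_positive.
suff down d : (d < K)%N -> exists2 b, positive b & height omv b = (K - d)%:R.
  rewrite hK ler_nat in k_le; have [|b posb hb] := down (K - k)%N; first by lia.
  by exists b; rewrite // fE // hb subKn.
elim: d => [|d IH] ltdK; first by exists a0; [apply: highest_root_positive | rewrite subn0].
have [b posb hb] := IH (ltnW ltdK).
have [|j posbj] := positive_root_sub_simple posb; first by rewrite hb ltr1n; lia.
exists (b - D j); rewrite // heightB hb height_simple.
by rewrite (_ : (K - d = (K - d.+1).+1)%N) ?natr1 -?natr1 ?addrK //; lia.
Qed.

End Highest.

Section Cover.
Hypothesis r_gt1 : (1 < r)%N.

Lemma simple_root_neighbor j : exists l, dynkin_adj j l.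
Proof.
have [l lj] : exists l : 'I_r, l != j.
  pose l0 : 'I_r := Ordinal (ltnW r_gt1); pose l1 : 'I_r := Ordinal r_gt1.
  by have [->|] := eqVneq j l0; [exists l1 | exists l0; rewrite eq_sym].
have /connectP[[|l' p] /= adj_p lE] := dynkin_connected j l.
  by rewrite lE eqxx in lj.
by exists l'; case/andP: adj_p.
Qed.

Lemma positive_root_primitive b : positive b -> exists z, pair b z = 1.
Proof.
move: b; apply: positive_root_ind => [j | b j _ _ _ [z bz]].
  have [l /eqP adj] := simple_root_neighbor j; exists (- cor (D l)).
  by rewrite -scaleN1r pairZr -/(cartan j l) adj.
by exists (reflY (D j) z); rewrite -pair_reflX.
Qed.

Variables (Q : 'rV[int]_m -> int) (n : nat) (ntil : 'rV[int]_m -> nat).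
Hypotheses (quadQ : is_quadratic_form Q) (weylQ : weyl_invariant Phi cor Q).
Hypotheses (n_gt0 : (0 < n)%N) (ntilde : is_ntilde Phi cor Q n ntil).

Lemma n_alpha_positive_root i b : positive b -> n_alpha Q n cor b = n_alpha Q n cor (D i).
Proof.
move=> posb; rewrite /n_alpha (positive_root_invariant (f := fun b => Q (cor b)) _ i posb) //.
by move=> a x aP xP; rewrite /= cor_reflX // weylQ.
Qed.

Lemma ntilde_positive_root i b : positive b -> ntil b = n_alpha Q n cor (D i).
Proof.
move=> posb; have [bP _] := posb; have [z bz] := positive_root_primitive posb.
by rewrite (ntilde_eq_n_alpha quadQ weylQ n_gt0 ntilde bP bz) (n_alpha_positive_root i posb).
Qed.

Lemma f_Y_positive_root i b : positive b ->
  f_Y ntil omv b = height omv b / (n_alpha Q n cor (D i))%:R.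
Proof. by move=> posb; rewrite /f_Y (ntilde_positive_root i posb). Qed.

Lemma f_X_positive_root (om : 'I_r -> 'rV[rat]_m) i b :
  (forall i j, pairXQ (om i) (cor (D j)) = (i == j)%:R) -> positive b ->
  f_X D ntil om (cor b) = height omv b / (n_alpha Q n cor (D i))%:R.
Proof.
move=> om_dual posb; have [_ [c [bE _]]] := posb.
rewrite /f_X (cor_positive_root posb bE) bE height_lincomb rmorph_sum mulr_suml.
apply: eq_bigr => l _; rewrite (ntilde_positive_root i (simple_root_positive l)); congr (_ / _).
rewrite /lincomb pairXQ_sumr (bigD1 l) //= om_dual eqxx mulr1 big1 ?addr0 // => l' /negbTE l'l.
by rewrite om_dual eq_sym l'l mulr0.
Qed.

End Cover.

End SimplyLaced.

End Base.

End RootDatum.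

Theorem lemma3p1 (m r n : nat) (Phi : seq 'rV[int]_m)
    (cor : 'rV[int]_m -> 'rV[int]_m) (D : 'I_r -> 'rV[int]_m)
    (Q : 'rV[int]_m -> int) (ntil : 'rV[int]_m -> nat)
    (om omv : 'I_r -> 'rV[rat]_m) (a0 : 'rV[int]_m) :
  is_reduced_root_datum Phi cor ->
  is_base Phi D ->
  irreducible_rs Phi cor ->
  simply_laced cor D ->
  (2 <= r)%N ->
  (0 < n)%N ->
  is_quadratic_form Q ->
  weyl_invariant Phi cor Q ->
  is_ntilde Phi cor Q n ntil ->
  (forall i j, pairXQ (om i) (cor (D j)) = (i == j)%:R) ->
  (forall i j, pairYQ (D j) (omv i) = (i == j)%:R) ->
  is_highest_root Phi D a0 ->
  (forall i j, n_alpha Q n cor (D i) = n_alpha Q n cor (D j)) /\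
  (forall (i : 'I_r) (q : rat),
     ((exists2 b, positive_root Phi D b & q = f_X D ntil om (cor b)) <->
      (exists k : nat, [/\ (1 <= k)%N, k%:R <= height omv a0 &
                           q = k%:R / (n_alpha Q n cor (D i))%:R])) /\
     ((exists2 b, positive_root Phi D b & q = f_Y ntil omv b) <->
      (exists k : nat, [/\ (1 <= k)%N, k%:R <= height omv a0 &
                           q = k%:R / (n_alpha Q n cor (D i))%:R]))).
Proof.
move=> rdPhi baseD irrPhi slD r_gt1 n_gt0 quadQ weylQ ntilde om_dual omv_dual highest.
have heights := positive_root_heights rdPhi baseD omv_dual slD irrPhi highest.
have n_alpha_pos := n_alpha_positive_root rdPhi baseD omv_dual slD irrPhi n weylQ.
have f_XE := f_X_positive_root rdPhi baseD omv_dual slD irrPhi r_gt1 quadQ weylQ n_gt0 ntilde.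
have f_YE := f_Y_positive_root rdPhi baseD omv_dual slD irrPhi r_gt1 quadQ weylQ n_gt0 ntilde.
split=> [i j | i q]; first exact: n_alpha_pos j _ (simple_root_positive baseD i).
by split; apply: (heights _ (fun h => h / (n_alpha Q n cor (D i))%:R)) => b posb;
  rewrite ?(f_XE _ i _ om_dual posb) ?(f_YE i _ posb).
Qed.
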